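(* For $x > 0$ let $$E(x) := \sqrt{1 - \exp\!\left(-x^2\,\frac{17 + 2x^2}{13.347 + 2x^2}\right)},$$ so that $E(x) = 2A(x\sqrt{2}) - 1$, where $A(y) = \frac{1}{2} + \frac{1}{2}\sqrt{1 - \exp\!\left(-y^2\frac{17+y^2}{26.694+2y^2}\right)}$. Then for every $x > 0$, $$\left|\frac{E(x) - \operatorname{erf}(x)}{\operatorname{erf}(x)}\right| < 1.79\cdot 10^{-4}.$$
   Context: $\operatorname{erf}(x) = \frac{2}{\sqrt{\pi}}\int_0^x e^{-t^2}\,dt$ is the error function; equivalently $\operatorname{erf}(x) = 2\Phi(x\sqrt{2}) - 1$, where $\Phi$ is the standard normal cumulative distribution function. *)

From Stdlib Require Import Reals Lra.
Open Scope R_scope.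

Lemma erf_integrand_continuous :
  forall t : R, continuity_pt (fun s => exp (- (s ^ 2))) t.
Proof. intro t. reg. Qed.

Lemma erf_integrable (x : R) :
  Riemann_integrable (fun t => exp (- (t ^ 2))) 0 x.
Proof.
  destruct (Rle_dec 0 x) as [H|H].
  - apply continuity_implies_RiemannInt; [exact H|].
    intros; apply erf_integrand_continuous.
  - apply RiemannInt_P1, continuity_implies_RiemannInt; [lra|].
    intros; apply erf_integrand_continuous.
Defined.

Definition erf (x : R) : R :=
  2 / sqrt PI * RiemannInt (erf_integrable x).

Definition E_approx (x : R) : R :=
  sqrt (1 - exp (- (x ^ 2) * ((17 + 2 * x ^ 2) / (13347 / 1000 + 2 * x ^ 2)))).

(* Write G(x) = int_0^x exp(-t^2) dt, so that erf = 2 G / sqrt(pi), and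
   uarg(s) = s (17 + 2s)/(13.347 + 2s) >= s, so that E(x)^2 = 1 - exp(-uarg(x^2)).
   Since E and erf are nonnegative, |E/erf - 1| < c (c = 1.79e-4) follows from
       (1-c)^2 * 4 G(x)^2 < pi (1 - exp(-uarg(x^2))) < (1+c)^2 * 4 G(x)^2,
   which is proved separately on two ranges of s = x^2:
   - s > 9: the classical bounds pi/4 (1 - exp(-x^2)) <= G(x)^2 <= pi/4, obtained
     because G(x)^2 + int_0^1 exp(-x^2 (1+t^2))/(1+t^2) dt is constant, together
     with exp(-uarg(s)) <= exp(-s) < exp(-9) < 1.3e-4;
   - 0 < s <= 9: the alternating Taylor bounds for exp(-u) and for G (the
     termwise integrated series) reduce both inequalities to polynomial
     inequalities in s with integer coefficients (after clearing the denominator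
     of uarg), which are certified on [0, 9] by a reflective positivity check. *)

From Stdlib Require Import Reals Lra Lia ZArith List Bool.
From Coquelicot Require Import Coquelicot.
Import ListNotations.
Open Scope R_scope.

Lemma nondecreasing_of_derive (f df : R -> R) (a b : R) : a <= b ->
  (forall x, a <= x <= b -> is_derive f x (df x)) ->
  (forall x, a <= x <= b -> 0 <= df x) -> f a <= f b.
Proof.
  intros Hab Hd Hp.
  destruct (MVT_gen f a b df) as [c [Hc Heq]].
  - intros x Hx. rewrite Rmin_left, Rmax_right in Hx by lra. apply Hd; lra.
  - intros x Hx. rewrite Rmin_left, Rmax_right in Hx by lra.
    apply continuity_pt_filterlim.
    apply (ex_derive_continuous (K:=R_AbsRing) (V:=R_NormedModule) f).
    eexists; apply Hd; lra.
  - rewrite Rmin_left, Rmax_right in Hc by lra.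
    assert (0 <= df c * (b - a)) by (apply Rmult_le_pos; [apply Hp; lra | lra]).
    lra.
Qed.

Lemma constant_of_derive_zero (f : R -> R) (x : R) : 0 <= x ->
  (forall t, is_derive f t 0) -> f x = f 0.
Proof.
  intros Hx Hd. apply Rle_antisym.
  - assert (- f 0 <= - f x); [|lra].
    apply (nondecreasing_of_derive (fun t => - f t) (fun _ => 0) 0 x Hx); [|intros; lra].
    intros t _. replace 0 with (- 0) by ring. apply (is_derive_opp f), Hd.
  - apply (nondecreasing_of_derive f (fun _ => 0) 0 x Hx); [|intros; lra].
    intros t _. apply Hd.
Qed.

(* auto_derive leaves equalities stated over Coquelicot's ring structure on R;
   this exposes them as plain real equalities so that field and ring apply. *)
Ltac as_real_eq :=
  repeat match goal with t : AbsRing.sort R_AbsRing |- _ => change R in t end;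
  match goal with |- @eq _ ?a ?b => change (@eq R a b) end.

(* Factorials as integers, so that concrete Taylor coefficients compute to numerals. *)
Fixpoint zfact (n : nat) : Z :=
  match n with O => 1%Z | S m => (Z.of_nat (S m) * zfact m)%Z end.

Lemma zfact_pos (n : nat) : (0 < zfact n)%Z.
Proof.
  induction n as [|n IH]; [simpl; lia|].
  change (zfact (S n)) with (Z.of_nat (S n) * zfact n)%Z. apply Z.mul_pos_pos; lia.
Qed.

Lemma IZR_zfact_pos (n : nat) : 0 < IZR (zfact n).
Proof. apply IZR_lt, zfact_pos. Qed.

Lemma IZR_zfact_S (n : nat) : IZR (zfact (S n)) = INR (S n) * IZR (zfact n).
Proof.
  change (zfact (S n)) with (Z.of_nat (S n) * zfact n)%Z.
  rewrite mult_IZR, <- INR_IZR_INZ. reflexivity.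
Qed.

Lemma INR_fact_zfact (n : nat) : INR (fact n) = IZR (zfact n).
Proof.
  induction n as [|n IH]; [reflexivity|].
  change (fact (S n)) with (S n * fact n)%nat. rewrite mult_INR, IH, IZR_zfact_S. reflexivity.
Qed.

Definition texpR (n : nat) (s : R) : R :=
  sum_f_R0 (fun k => (-1) ^ k * s ^ k / IZR (zfact k)) n.

Lemma texpR_0 (n : nat) : texpR n 0 = 1.
Proof.
  induction n as [|n IH]; unfold texpR in *; [simpl; field|].
  rewrite tech5, IH, pow_i by lia. unfold Rdiv. ring.
Qed.

Lemma texpR_derive (n : nat) (s : R) : is_derive (texpR (S n)) s (- texpR n s).
Proof.
  induction n as [|n IH].
  - unfold texpR; simpl. auto_derive; [auto|as_real_eq; field].
  - assert (Hz := IZR_zfact_pos (S n)).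
    set (a := (-1) ^ S (S n) / IZR (zfact (S (S n)))).
    apply (is_derive_ext (fun t => texpR (S n) t + a * t ^ S (S n))).
    { intros t. unfold texpR, a. rewrite (tech5 _ (S n)). as_real_eq. field.
      apply Rgt_not_eq, IZR_zfact_pos. }
    replace (- texpR (S n) s)
      with (- texpR n s + a * (INR (S (S n)) * 1 * s ^ Init.Nat.pred (S (S n)))).
    + apply (is_derive_plus (texpR (S n))); [exact IH|].
      apply (is_derive_scal (fun t => t ^ S (S n))), is_derive_pow, (is_derive_id (K:=R_AbsRing)).
    + unfold a. rewrite IZR_zfact_S. unfold texpR. rewrite (tech5 _ n). simpl pred.
      simpl pow. field. split; [apply Rgt_not_eq; exact Hz|].
      apply Rgt_not_eq, lt_0_INR; lia.
Qed.

Lemma exp_neg_le1 (s : R) : 0 <= s -> exp (- s) <= 1.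
Proof.
  intros H. rewrite <- exp_0. destruct (Req_dec s 0) as [->|Hn].
  - rewrite Ropp_0; lra.
  - left; apply exp_increasing; lra.
Qed.

(* For s >= 0 the Taylor polynomials of exp(-s) alternate around it:
   T_n(s) <= exp(-s) for n odd and exp(-s) <= T_n(s) for n even. *)
Lemma exp_neg_taylor (n : nat) (s : R) : 0 <= s ->
  0 <= (-1) ^ S n * (exp (- s) - texpR n s).
Proof.
  revert s; induction n as [|n IH]; intros s Hs.
  - unfold texpR; simpl. assert (H := exp_neg_le1 s Hs). lra.
  - assert (H0 : (-1) ^ S (S n) * (exp (- 0) - texpR (S n) 0) = 0)
      by (rewrite texpR_0, Ropp_0, exp_0; ring).
    rewrite <- H0.
    apply (nondecreasing_of_derive (fun t => (-1) ^ S (S n) * (exp (- t) - texpR (S n) t))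
             (fun t => (-1) ^ S n * (exp (- t) - texpR n t))); [lra| |].
    + intros x _.
      replace ((-1) ^ S n * (exp (- x) - texpR n x))
        with ((-1) ^ S (S n) * (- exp (- x) - - texpR n x)) by (simpl; ring).
      apply (is_derive_scal (fun t => exp (- t) - texpR (S n) t)).
      apply (is_derive_minus (fun t => exp (- t)) (texpR (S n))).
      * auto_derive; auto; ring.
      * apply texpR_derive.
    + intros x Hx. apply IH; lra.
Qed.

Definition gauss (t : R) : R := exp (- (t ^ 2)).
Definition G (x : R) : R := RInt gauss 0 x.

Lemma gauss_continuous (t : R) : continuous gauss t.
Proof.
  apply (ex_derive_continuous (K:=R_AbsRing) (V:=R_NormedModule) gauss).
  unfold gauss; auto_derive; auto.
Qed.

Lemma ex_RInt_gauss (a b : R) : ex_RInt gauss a b.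
Proof. apply (ex_RInt_continuous (V:=R_CompleteNormedModule)). intros; apply gauss_continuous. Qed.

Lemma G_derive (x : R) : is_derive G x (gauss x).
Proof.
  apply (is_derive_RInt gauss G 0 x).
  - apply filter_forall. intros b. apply (RInt_correct (V:=R_CompleteNormedModule)), ex_RInt_gauss.
  - apply gauss_continuous.
Qed.

Lemma G_0 : G 0 = 0.
Proof. exact (RInt_point (V:=R_CompleteNormedModule) 0 gauss). Qed.

Lemma G_nonneg (x : R) : 0 <= x -> 0 <= G x.
Proof.
  intros Hx. rewrite <- G_0. apply (nondecreasing_of_derive G gauss 0 x Hx).
  - intros; apply G_derive.
  - intros; unfold gauss; apply Rlt_le, exp_pos.
Qed.

Lemma erf_eq_G (x : R) : erf x = 2 / sqrt PI * G x.
Proof. unfold erf, G. f_equal. symmetry. apply (RInt_Reals gauss 0 x (erf_integrable x)). Qed.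

(* Termwise integral of the Taylor polynomial T_M(t^2):
   int_0^x T_M(t^2) dt = x * Lsum M (x^2). *)
Definition Lsum (M : nat) (s : R) : R :=
  sum_f_R0 (fun k => (-1) ^ k * s ^ k / (IZR (zfact k) * (2 * INR k + 1))) M.

Lemma Lsum_derive (M : nat) (x : R) :
  is_derive (fun t => t * Lsum M (t ^ 2)) x (texpR M (x ^ 2)).
Proof.
  induction M as [|M IH].
  - unfold Lsum, texpR; simpl.
    apply (is_derive_ext (fun t => t)). { intros; simpl; as_real_eq; field. }
    replace (1 * 1 / 1) with 1 by field. apply (is_derive_id (K:=R_AbsRing)).
  - assert (Hz := IZR_zfact_pos (S M)).
    assert (Hi : 0 < 2 * INR (S M) + 1) by (assert (H := pos_INR (S M)); lra).
    set (a := (-1) ^ S M / (IZR (zfact (S M)) * (2 * INR (S M) + 1))).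
    apply (is_derive_ext (fun t => t * Lsum M (t ^ 2) + a * t ^ (2 * S M + 1))).
    { intros t. unfold Lsum, a. rewrite tech5, <- pow_mult.
      replace (t ^ (2 * S M + 1)) with (t * t ^ (2 * S M)) by (rewrite pow_add; ring).
      as_real_eq. field. lra. }
    replace (texpR (S M) (x ^ 2))
      with (texpR M (x ^ 2) + a * (INR (2 * S M + 1) * 1 * x ^ Init.Nat.pred (2 * S M + 1))).
    + apply (is_derive_plus (fun t => t * Lsum M (t ^ 2))); [exact IH|].
      apply (is_derive_scal (fun t => t ^ (2 * S M + 1))), is_derive_pow, (is_derive_id (K:=R_AbsRing)).
    + unfold texpR, a. rewrite (tech5 _ M).
      replace (Init.Nat.pred (2 * S M + 1)) with (2 * S M)%nat by lia.
      rewrite pow_mult, plus_INR, mult_INR. simpl (INR 2). simpl (INR 1).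
      field. lra.
Qed.

(* Integrating the alternating bounds of exp(-t^2): for x >= 0,
   x Lsum M (x^2) bounds G(x) from below for M odd and from above for M even. *)
Lemma G_taylor (M : nat) (x : R) : 0 <= x ->
  0 <= (-1) ^ S M * (G x - x * Lsum M (x ^ 2)).
Proof.
  intros Hx.
  assert (H0 : (-1) ^ S M * (G 0 - 0 * Lsum M (0 ^ 2)) = 0) by (rewrite G_0; ring).
  rewrite <- H0.
  apply (nondecreasing_of_derive (fun t => (-1) ^ S M * (G t - t * Lsum M (t ^ 2)))
           (fun t => (-1) ^ S M * (exp (- (t ^ 2)) - texpR M (t ^ 2)))); [lra| |].
  - intros t _. apply (is_derive_scal (fun t => G t - t * Lsum M (t ^ 2))).
    apply (is_derive_minus G (fun t => t * Lsum M (t ^ 2))); [apply G_derive|apply Lsum_derive].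
  - intros t _. apply exp_neg_taylor, pow2_ge_0.
Qed.

(* The classical bounds pi/4 (1 - exp(-x^2)) <= G(x)^2 <= pi/4 for x >= 0 follow from
   the fact that G(x)^2 + int_0^1 exp(-x^2 (1+t^2))/(1+t^2) dt does not depend on x. *)
Definition gauss_kernel (x t : R) : R := exp (- (x ^ 2 * (1 + t ^ 2))) / (1 + t ^ 2).
Definition gauss_tail (x : R) : R := RInt (gauss_kernel x) 0 1.

Lemma one_plus_sq_pos (t : R) : 0 < 1 + t ^ 2.
Proof. assert (H := pow2_ge_0 t). lra. Qed.

Lemma gauss_kernel_derive (x t : R) :
  is_derive (fun z => gauss_kernel z t) x (-2 * x * exp (- (x ^ 2 * (1 + t ^ 2)))).
Proof.
  unfold gauss_kernel. assert (H := one_plus_sq_pos t).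
  auto_derive; [trivial|].
  as_real_eq. replace (x * (x * 1) * (1 + t * (t * 1))) with (x ^ 2 * (1 + t ^ 2)) by ring.
  field. apply Rgt_not_eq; lra.
Qed.

Lemma ex_RInt_gauss_kernel (x a b : R) : ex_RInt (gauss_kernel x) a b.
Proof.
  apply (ex_RInt_continuous (V:=R_CompleteNormedModule)). intros t _.
  apply (ex_derive_continuous (K:=R_AbsRing) (V:=R_NormedModule) (gauss_kernel x)).
  unfold gauss_kernel; auto_derive. assert (H := one_plus_sq_pos t). simpl in H. lra.
Qed.

(* Differentiation under the integral sign, then the substitution t -> x t. *)
Lemma gauss_tail_derive (x : R) : is_derive gauss_tail x (-2 * exp (- (x ^ 2)) * G x).
Proof.
  assert (Hd : is_derive (fun z => RInt (fun t => gauss_kernel z t) 0 1) x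
                 (RInt (fun t => Derive (fun z => gauss_kernel z t) x) 0 1)).
  { apply (is_derive_RInt_param gauss_kernel 0 1 x).
    - apply filter_forall. intros y t _. eexists. apply gauss_kernel_derive.
    - intros t _.
      apply (continuity_2d_pt_ext (fun u v => -2 * u * exp (- (u * u * (1 + v * v))))).
      { intros u v. symmetry. apply is_derive_unique.
        replace (u * u * (1 + v * v)) with (u ^ 2 * (1 + v ^ 2)) by ring.
        apply gauss_kernel_derive. }
      apply continuity_2d_pt_mult.
      + apply continuity_2d_pt_mult; [apply continuity_2d_pt_const|apply continuity_2d_pt_id1].
      + apply (continuity_1d_2d_pt_comp exp (fun u v => - (u * u * (1 + v * v)))).
        * apply derivable_continuous_pt, derivable_pt_exp.
        * apply continuity_2d_pt_opp, continuity_2d_pt_mult.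
          -- apply continuity_2d_pt_mult; apply continuity_2d_pt_id1.
          -- apply continuity_2d_pt_plus; [apply continuity_2d_pt_const|].
             apply continuity_2d_pt_mult; apply continuity_2d_pt_id2.
    - apply filter_forall. intros y. apply ex_RInt_gauss_kernel. }
  unfold gauss_tail.
  replace (-2 * exp (- (x ^ 2)) * G x)
    with (RInt (fun t => Derive (fun z => gauss_kernel z t) x) 0 1); [exact Hd|].
  rewrite (RInt_ext _ (fun t => scal (-2 * exp (- (x ^ 2))) (scal x (gauss (x * t + 0))))).
  2:{ intros t _.
      apply eq_trans with (-2 * x * exp (- (x ^ 2 * (1 + t ^ 2))));
        [apply is_derive_unique, gauss_kernel_derive|].
      change (-2 * x * exp (- (x ^ 2 * (1 + t ^ 2)))
              = (-2 * exp (- (x ^ 2))) * (x * gauss (x * t + 0))).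
      unfold gauss.
      replace (- (x ^ 2 * (1 + t ^ 2))) with (- (x ^ 2) + - ((x * t + 0) ^ 2)) by ring.
      rewrite exp_plus. ring. }
  rewrite (RInt_scal (V:=R_CompleteNormedModule)).
  2:{ apply (ex_RInt_continuous (V:=R_CompleteNormedModule)). intros z _.
      apply (ex_derive_continuous (K:=R_AbsRing) (V:=R_NormedModule)).
      unfold gauss, scal; simpl; unfold mult; simpl. auto_derive. auto. }
  rewrite (RInt_comp_lin (V:=R_CompleteNormedModule)) by apply ex_RInt_gauss.
  replace (x * 0 + 0) with 0 by ring. replace (x * 1 + 0) with x by ring.
  reflexivity.
Qed.

Lemma RInt_arctan_derivative : RInt (fun t => / (1 + t ^ 2)) 0 1 = PI / 4.
Proof.
  assert (H : is_RInt (fun t => / (1 + t ^ 2)) 0 1 (minus (atan 1) (atan 0))).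
  { apply (is_RInt_derive (V:=R_CompleteNormedModule) atan).
    - intros t _. apply is_derive_Reals, derivable_pt_lim_atan.
    - intros t _. apply (ex_derive_continuous (K:=R_AbsRing) (V:=R_NormedModule)).
      auto_derive. assert (H := one_plus_sq_pos t). simpl in H. lra. }
  apply (is_RInt_unique (V:=R_CompleteNormedModule)) in H.
  rewrite H, atan_1, atan_0. unfold minus, plus, opp; simpl. ring.
Qed.

Lemma gauss_invariant (x : R) : 0 <= x -> G x ^ 2 + gauss_tail x = PI / 4.
Proof.
  intros Hx.
  rewrite (constant_of_derive_zero (fun z => G z ^ 2 + gauss_tail z) x Hx).
  - unfold gauss_tail. rewrite G_0, <- RInt_arctan_derivative.
    rewrite (RInt_ext _ (fun t => / (1 + t ^ 2))); [simpl; ring|].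
    intros t _. unfold gauss_kernel.
    replace (- (0 ^ 2 * (1 + t ^ 2))) with 0 by ring. rewrite exp_0.
    as_real_eq. unfold Rdiv. ring.
  - intros t.
    replace 0 with (INR 2 * gauss t * G t ^ Init.Nat.pred 2 + (-2 * exp (- (t ^ 2)) * G t))
      by (unfold gauss; simpl; ring).
    apply (is_derive_plus (fun z => G z ^ 2) gauss_tail).
    + apply is_derive_pow, G_derive.
    + apply gauss_tail_derive.
Qed.

Lemma G_sq_le (x : R) : 0 <= x -> G x ^ 2 <= PI / 4.
Proof.
  intros Hx. rewrite <- (gauss_invariant x Hx).
  assert (0 <= gauss_tail x); [|lra].
  apply RInt_ge_0; [lra | apply ex_RInt_gauss_kernel |].
  intros t _. apply Rlt_le, Rdiv_lt_0_compat; [apply exp_pos | apply one_plus_sq_pos].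
Qed.

Lemma G_sq_ge (x : R) : 0 <= x -> PI / 4 * (1 - exp (- (x ^ 2))) <= G x ^ 2.
Proof.
  intros Hx. assert (Hinv := gauss_invariant x Hx).
  assert (gauss_tail x <= exp (- (x ^ 2)) * (PI / 4)); [|lra].
  assert (Hcont : ex_RInt (fun t => / (1 + t ^ 2)) 0 1).
  { apply (ex_RInt_continuous (V:=R_CompleteNormedModule)). intros z _.
    apply (ex_derive_continuous (K:=R_AbsRing) (V:=R_NormedModule)).
    auto_derive. assert (H := one_plus_sq_pos z). simpl in H. lra. }
  rewrite <- RInt_arctan_derivative, <- (RInt_scal (V:=R_CompleteNormedModule)) by exact Hcont.
  apply RInt_le; [lra | apply ex_RInt_gauss_kernel | apply (ex_RInt_scal (V:=R_CompleteNormedModule)), Hcont |].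
  intros t _. unfold gauss_kernel.
  change (exp (- (x ^ 2 * (1 + t ^ 2))) / (1 + t ^ 2) <= exp (- (x ^ 2)) * / (1 + t ^ 2)).
  assert (Ht := one_plus_sq_pos t). unfold Rdiv.
  apply Rmult_le_compat_r; [apply Rlt_le, Rinv_0_lt_compat; lra|].
  assert (0 <= x ^ 2 * t ^ 2) by (apply Rmult_le_pos; apply pow2_ge_0).
  destruct (Req_dec (x ^ 2) (x ^ 2 * (1 + t ^ 2))) as [Heq|Hne].
  - rewrite <- Heq; lra.
  - left; apply exp_increasing; lra.
Qed.

Lemma G_pos (x : R) : 0 < x -> 0 < G x.
Proof.
  intros Hx. assert (H := G_sq_ge x (Rlt_le _ _ Hx)).
  assert (exp (- (x ^ 2)) < 1).
  { rewrite <- exp_0. apply exp_increasing. assert (0 < x ^ 2) by (apply pow_lt; lra). lra. }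
  assert (HPI := PI_RGT_0). assert (HG := G_nonneg x (Rlt_le _ _ Hx)).
  destruct HG as [HG|HG]; [exact HG|]. rewrite <- HG in H. nra.
Qed.

(* Rational bounds on pi from the Taylor bounds of cos around pi/2. *)
Definition cosZ (a : R) (n : nat) : R :=
  sum_f_R0 (fun i => (-1) ^ i * (a ^ (2 * i) / IZR (zfact (2 * i)))) n.

Lemma cos_approx_Z (a : R) (n : nat) : cos_approx a n = cosZ a n.
Proof.
  unfold cos_approx, cosZ, cos_term. apply sum_eq. intros i _. rewrite INR_fact_zfact. reflexivity.
Qed.

Lemma PI_lower : 31415926 / 10000000 < PI.
Proof.
  assert (H : 31415926 / 20000000 < PI / 2); [|lra].
  apply PI2_lower_bound; [lra|].
  destruct (pre_cos_bound (31415926 / 20000000) 3) as [H1 _]; [lra|lra|].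
  eapply Rlt_le_trans; [|exact H1].
  rewrite cos_approx_Z. unfold cosZ.
  cbv [sum_f_R0 Nat.mul Nat.add zfact Z.of_nat Z.mul Pos.mul Pos.of_succ_nat Pos.succ Pos.add].
  lra.
Qed.

Lemma PI_upper : PI < 31415927 / 10000000.
Proof.
  destruct (Rlt_or_le PI (31415927 / 10000000)) as [H|H]; [exact H|exfalso].
  assert (Hc : 0 <= cos (31415927 / 20000000)).
  { apply cos_ge_0; assert (H0 := PI_RGT_0); lra. }
  destruct (pre_cos_bound (31415927 / 20000000) 3) as [_ H1]; [lra|lra|].
  assert (cos_approx (31415927 / 20000000) (2 * (3 + 1)) < 0); [|lra].
  rewrite cos_approx_Z. unfold cosZ.
  cbv [sum_f_R0 Nat.mul Nat.add zfact Z.of_nat Z.mul Pos.mul Pos.of_succ_nat Pos.succ Pos.add].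
  lra.
Qed.

(* Integer polynomials as coefficient lists, constant term first, with the ring
   operations and Taylor shift p(X) |-> p(a + X). *)
Fixpoint padd (p q : list Z) : list Z :=
  match p, q with
  | nil, _ => q
  | _, nil => p
  | a :: p', b :: q' => (a + b)%Z :: padd p' q'
  end.
Definition pscal (c : Z) (p : list Z) : list Z := map (Z.mul c) p.
Fixpoint pmul (p q : list Z) : list Z :=
  match p with
  | nil => nil
  | a :: p' => padd (pscal a q) (0%Z :: pmul p' q)
  end.
Fixpoint ppow (p : list Z) (n : nat) : list Z :=
  match n with O => [1%Z] | S m => pmul p (ppow p m) end.
Fixpoint pshift (p : list Z) (a : Z) : list Z :=
  match p with
  | nil => nil
  | c :: q => padd [c] (pmul [a; 1%Z] (pshift q a))
  end.

Fixpoint pev (p : list Z) (x : R) : R :=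
  match p with nil => 0 | c :: q => IZR c + x * pev q x end.

Lemma pev_padd (p q : list Z) (x : R) : pev (padd p q) x = pev p x + pev q x.
Proof.
  revert q; induction p as [|a p IH]; intros [|b q]; simpl; try ring.
  rewrite IH, plus_IZR; ring.
Qed.

Lemma pev_pscal (c : Z) (p : list Z) (x : R) : pev (pscal c p) x = IZR c * pev p x.
Proof. induction p as [|a p IH]; simpl; [ring|]. rewrite IH, mult_IZR; ring. Qed.

Lemma pev_pmul (p q : list Z) (x : R) : pev (pmul p q) x = pev p x * pev q x.
Proof.
  induction p as [|a p IH]; [simpl; ring|].
  change (pmul (a :: p) q) with (padd (pscal a q) (0%Z :: pmul p q)).
  rewrite pev_padd, pev_pscal; simpl pev; rewrite IH; ring.
Qed.

Lemma pev_ppow (p : list Z) (n : nat) (x : R) : pev (ppow p n) x = pev p x ^ n.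
Proof.
  induction n as [|n IH]; [simpl; ring|].
  change (ppow p (S n)) with (pmul p (ppow p n)). rewrite pev_pmul, IH; simpl; ring.
Qed.

Lemma pev_pshift (p : list Z) (a : Z) (y : R) : pev (pshift p a) y = pev p (IZR a + y).
Proof.
  induction p as [|c p IH]; [simpl; ring|].
  change (pshift (c :: p) a) with (padd [c] (pmul [a; 1%Z] (pshift p a))).
  rewrite pev_padd, pev_pmul; simpl pev; rewrite IH; ring.
Qed.

Lemma pev_tl (p : list Z) (s : R) : hd 0%Z p = 0%Z -> pev p s = s * pev (tl p) s.
Proof. destruct p as [|c p]; simpl; intros H; [ring|]. rewrite H; ring. Qed.

Fixpoint negsum (p : list Z) : Z :=
  match p with nil => 0%Z | c :: q => (Z.min c 0 + negsum q)%Z end.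

Lemma negsum_nonpos (p : list Z) : (negsum p <= 0)%Z.
Proof. induction p; simpl; lia. Qed.

Lemma pev_ge_negsum (p : list Z) (y : R) : 0 <= y <= 1 -> IZR (negsum p) <= pev p y.
Proof.
  intros Hy; induction p as [|c p IH]; simpl; [lra|].
  rewrite plus_IZR.
  assert (H0 : IZR (negsum p) <= 0) by (apply IZR_le, negsum_nonpos).
  assert (Hm : IZR (Z.min c 0) <= IZR c) by (apply IZR_le; lia).
  assert (IZR (Z.min c 0) <= 0) by (apply IZR_le; lia).
  assert (y * IZR (negsum p) <= y * pev p y) by (apply Rmult_le_compat_l; lra).
  assert (IZR (negsum p) <= y * IZR (negsum p)) by nra.
  lra.
Qed.

(* Positivity certificate on [a, a+1]: after shifting to p(a + y), the constant
   term dominates the sum of the negative coefficients. *)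
Definition pos_on_unit (p : list Z) (a : Z) : bool :=
  match pshift p a with nil => false | c :: q => Z.ltb 0 (c + negsum q) end.

Fixpoint pos_on (p : list Z) (n : nat) : bool :=
  match n with O => true | S m => pos_on_unit p (Z.of_nat m) && pos_on p m end.

Lemma pos_on_unit_correct (p : list Z) (a : Z) : pos_on_unit p a = true ->
  forall y, 0 <= y <= 1 -> 0 < pev p (IZR a + y).
Proof.
  unfold pos_on_unit; intros H y Hy; rewrite <- pev_pshift.
  destruct (pshift p a) as [|c q]; [discriminate|].
  apply Z.ltb_lt, IZR_lt in H. rewrite plus_IZR in H. simpl.
  assert (H1 := pev_ge_negsum q y Hy).
  assert (H0 : IZR (negsum q) <= 0) by (apply IZR_le, negsum_nonpos).
  assert (y * IZR (negsum q) <= y * pev q y) by (apply Rmult_le_compat_l; lra).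
  assert (IZR (negsum q) <= y * IZR (negsum q)) by nra.
  lra.
Qed.

Lemma pos_on_correct (p : list Z) (n : nat) : pos_on p (S n) = true ->
  forall s, 0 <= s <= INR (S n) -> 0 < pev p s.
Proof.
  induction n as [|n IH]; intros H s Hs.
  - apply andb_prop in H as [H1 _].
    replace s with (IZR (Z.of_nat 0) + s) by (simpl; ring).
    apply (pos_on_unit_correct _ _ H1). simpl in Hs. lra.
  - change (pos_on p (S (S n))) with (pos_on_unit p (Z.of_nat (S n)) && pos_on p (S n)) in H.
    apply andb_prop in H as [H1 H2].
    destruct (Rle_dec s (INR (S n))) as [Hl|Hl]; [apply IH; auto; lra|].
    replace s with (IZR (Z.of_nat (S n)) + (s - INR (S n))) by (rewrite <- INR_IZR_INZ; ring).
    apply (pos_on_unit_correct _ _ H1). rewrite S_INR in Hs. lra.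
Qed.

Definition uarg (s : R) : R := s * ((17 + 2 * s) / (13347 / 1000 + 2 * s)).

Lemma uarg_ge (s : R) : 0 <= s -> s <= uarg s.
Proof.
  intros Hs. unfold uarg.
  apply (Rmult_le_reg_r (13347 / 1000 + 2 * s)); [lra|].
  field_simplify; [nra|lra].
Qed.

Lemma pev_map_seq (f : nat -> Z) (a n : nat) (s : R) :
  pev (map f (seq a (S n))) s = sum_f_R0 (fun k => IZR (f (a + k)%nat) * s ^ k) n.
Proof.
  revert a; induction n as [|n IH]; intros a.
  - simpl. rewrite Nat.add_0_r. ring.
  - change (pev (map f (seq a (S (S n)))) s) with (IZR (f a) + s * pev (map f (seq (S a) (S n))) s).
    rewrite IH, (decomp_sum _ (S n)) by lia. simpl pred.
    rewrite Nat.add_0_r, scal_sum. f_equal; [ring|].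
    apply sum_eq. intros i _. replace (a + S i)%nat with (S a + i)%nat by lia. simpl. ring.
Qed.

Lemma pev_fold_seq (g : nat -> list Z) (a n : nat) (s : R) :
  pev (fold_right (fun k acc => padd (g k) acc) nil (seq a (S n))) s =
  sum_f_R0 (fun k => pev (g (a + k)%nat) s) n.
Proof.
  revert a; induction n as [|n IH]; intros a.
  - simpl. rewrite pev_padd, Nat.add_0_r. simpl. ring.
  - change (fold_right (fun k acc => padd (g k) acc) nil (seq a (S (S n))))
      with (padd (g a) (fold_right (fun k acc => padd (g k) acc) nil (seq (S a) (S n)))).
    rewrite pev_padd, IH, (decomp_sum _ (S n)) by lia. simpl pred.
    rewrite Nat.add_0_r. f_equal.
    apply sum_eq. intros i _. replace (a + S i)%nat with (S a + i)%nat by lia. reflexivity.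
Qed.

Lemma IZR_div_exact (a b : Z) : b <> 0%Z -> Z.divide b a -> IZR (a / b) = IZR a / IZR b.
Proof.
  intros Hb [q ->]. rewrite Z.div_mul, mult_IZR by exact Hb.
  field. apply not_0_IZR; exact Hb.
Qed.

Lemma zfact_divide (k n : nat) : (k <= n)%nat -> Z.divide (zfact k) (zfact n).
Proof.
  induction n as [|n IH]; intros H.
  - replace k with 0%nat by lia. apply Z.divide_refl.
  - destruct (Nat.eq_dec k (S n)) as [->|Hne]; [apply Z.divide_refl|].
    change (zfact (S n)) with (Z.of_nat (S n) * zfact n)%Z.
    apply Z.divide_mul_r, IH; lia.
Qed.

(* Common denominator of the coefficients of Lsum M: M! * 3 * 5 * ... * (2M+1). *)
Fixpoint oddprod (n : nat) : Z :=
  match n with O => 1%Z | S m => ((2 * Z.of_nat (S m) + 1) * oddprod m)%Z end.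
Definition Lden (M : nat) : Z := (zfact M * oddprod M)%Z.

Lemma oddprod_divide (k n : nat) : (k <= n)%nat -> Z.divide (2 * Z.of_nat k + 1) (oddprod n).
Proof.
  induction n as [|n IH]; intros H.
  - replace k with 0%nat by lia. apply Z.divide_refl.
  - change (oddprod (S n)) with ((2 * Z.of_nat (S n) + 1) * oddprod n)%Z.
    destruct (Nat.eq_dec k (S n)) as [->|Hne].
    + apply Z.divide_mul_l, Z.divide_refl.
    + apply Z.divide_mul_r, IH; lia.
Qed.

Lemma Lden_pos (M : nat) : 0 < IZR (Lden M).
Proof.
  apply IZR_lt. unfold Lden. apply Z.mul_pos_pos; [apply zfact_pos|].
  induction M as [|M IH]; [simpl; lia|].
  change (oddprod (S M)) with ((2 * Z.of_nat (S M) + 1) * oddprod M)%Z. apply Z.mul_pos_pos; lia.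
Qed.

Definition Lpoly (M : nat) : list Z :=
  map (fun k => ((-1) ^ Z.of_nat k * (Lden M / (zfact k * (2 * Z.of_nat k + 1))))%Z)
      (seq 0 (S M)).

Lemma pev_Lpoly (M : nat) (s : R) : pev (Lpoly M) s = IZR (Lden M) * Lsum M s.
Proof.
  unfold Lpoly. rewrite pev_map_seq. unfold Lsum. rewrite scal_sum.
  apply sum_eq. intros k Hk. simpl (0 + k)%nat.
  assert (Hz := zfact_pos k).
  rewrite mult_IZR, <- pow_IZR, IZR_div_exact.
  - rewrite mult_IZR, plus_IZR, mult_IZR, <- INR_IZR_INZ. field.
    split; [assert (H := pos_INR k); lra | apply Rgt_not_eq, IZR_zfact_pos].
  - lia.
  - unfold Lden. apply Z.divide_trans with (zfact k * oddprod M)%Z.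
    + apply Z.mul_divide_mono_l, oddprod_divide; lia.
    + apply Z.mul_divide_mono_r, zfact_divide; lia.
Qed.

(* uarg s = Unum(s) / Uden(s) with integer polynomials (scaled by 1000). *)
Definition Unum : list Z := [0; 17000; 2000]%Z.
Definition Uden : list Z := [13347; 2000]%Z.

Lemma pev_Unum (s : R) : pev Unum s = 17000 * s + 2000 * s ^ 2.
Proof. simpl. ring. Qed.

Lemma pev_Uden (s : R) : pev Uden s = 13347 + 2000 * s.
Proof. simpl. ring. Qed.

(* Integer polynomial N! Uden^N T_N(Unum/Uden), then N! Uden^N (1 - T_N(uarg s)). *)
Definition Tpoly (N : nat) : list Z :=
  fold_right (fun k acc =>
      padd (pscal ((-1) ^ Z.of_nat k * (zfact N / zfact k))%Z
                  (pmul (ppow Unum k) (ppow Uden (N - k)))) acc)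
    nil (seq 0 (S N)).
Definition one_minus_Tpoly (N : nat) : list Z :=
  padd (pscal (zfact N) (ppow Uden N)) (pscal (-1) (Tpoly N)).

Lemma pev_one_minus_Tpoly (N : nat) (s : R) : 0 <= s ->
  pev (one_minus_Tpoly N) s =
  IZR (zfact N) * (13347 + 2000 * s) ^ N * (1 - texpR N (uarg s)).
Proof.
  intros Hs.
  assert (HD : 0 < 13347 + 2000 * s) by lra.
  assert (HT : pev (Tpoly N) s = IZR (zfact N) * (13347 + 2000 * s) ^ N * texpR N (uarg s)).
  { unfold Tpoly. rewrite pev_fold_seq. unfold texpR. rewrite scal_sum.
    apply sum_eq. intros k Hk. simpl (0 + k)%nat.
    rewrite pev_pscal, pev_pmul, !pev_ppow, pev_Unum, pev_Uden, mult_IZR, <- pow_IZR.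
    rewrite IZR_div_exact by (try (assert (Hz := zfact_pos k); lia); apply zfact_divide; lia).
    replace (uarg s) with ((17000 * s + 2000 * s ^ 2) / (13347 + 2000 * s)) by (unfold uarg; field; lra).
    replace ((13347 + 2000 * s) ^ N)
      with ((13347 + 2000 * s) ^ (N - k) * (13347 + 2000 * s) ^ k) by (rewrite <- pow_add; f_equal; lia).
    unfold Rdiv. rewrite Rpow_mult_distr, pow_inv.
    field. split; [apply Rgt_not_eq, IZR_zfact_pos | apply pow_nonzero; lra]. }
  unfold one_minus_Tpoly. rewrite pev_padd, !pev_pscal, pev_ppow, pev_Uden, HT. ring.
Qed.

(* Certificate polynomial for  b (1 - T_N(uarg s)) < a s Lsum M (s)^2 : it equals
   N! Uden^N Lden^2 (a s Lsum^2 - b (1 - T_N)) / s, the division by s being exact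
   because 1 - T_N(uarg s) vanishes at s = 0. *)
Definition cert (M N : nat) (a b : Z) : list Z :=
  padd (pscal (a * zfact N) (pmul (pmul (Lpoly M) (Lpoly M)) (ppow Uden N)))
       (pscal (- (b * (Lden M * Lden M))) (tl (one_minus_Tpoly N))).

Lemma cert_sound (M N : nat) (a b : Z) (s : R) : 0 < s ->
  hd 0%Z (one_minus_Tpoly N) = 0%Z -> 0 < pev (cert M N a b) s ->
  IZR b * (1 - texpR N (uarg s)) < IZR a * (s * Lsum M s ^ 2).
Proof.
  intros Hs Hhd Hpos.
  assert (Htl := pev_tl _ s Hhd). rewrite pev_one_minus_Tpoly in Htl by lra.
  set (K := IZR (zfact N) * (13347 + 2000 * s) ^ N) in Htl.
  assert (HK : 0 < K) by (apply Rmult_lt_0_compat; [apply IZR_zfact_pos | apply pow_lt; lra]).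
  assert (HC := Lden_pos M).
  assert (Hval : s * pev (cert M N a b) s
                 = K * IZR (Lden M) ^ 2 * (IZR a * (s * Lsum M s ^ 2) - IZR b * (1 - texpR N (uarg s)))).
  { unfold cert. rewrite pev_padd, !pev_pscal, !pev_pmul, pev_ppow, pev_Lpoly.
    rewrite pev_Uden, opp_IZR, !mult_IZR.
    set (Q := pev (tl (one_minus_Tpoly N)) s) in *.
    replace (s * (IZR a * IZR (zfact N) * (IZR (Lden M) * Lsum M s * (IZR (Lden M) * Lsum M s)
                                             * (13347 + 2000 * s) ^ N)
                  + - (IZR b * (IZR (Lden M) * IZR (Lden M))) * Q))
      with (s * IZR a * K * (IZR (Lden M) * Lsum M s) ^ 2 - IZR b * IZR (Lden M) ^ 2 * (s * Q))
      by (unfold K; ring).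
    rewrite <- Htl. ring. }
  assert (0 < s * pev (cert M N a b) s) by (apply Rmult_lt_0_compat; lra).
  assert (0 < K * IZR (Lden M) ^ 2) by (apply Rmult_lt_0_compat; [lra | apply pow_lt; lra]).
  assert (0 < IZR a * (s * Lsum M s ^ 2) - IZR b * (1 - texpR N (uarg s))); [|lra].
  apply (Rmult_lt_reg_l (K * IZR (Lden M) ^ 2)); lra.
Qed.

Lemma one_minus_Tpoly_35_hd : hd 0%Z (one_minus_Tpoly 35) = 0%Z.
Proof. vm_compute. reflexivity. Qed.

Lemma one_minus_Tpoly_34_hd : hd 0%Z (one_minus_Tpoly 34) = 0%Z.
Proof. vm_compute. reflexivity. Qed.

Lemma INR_9 : INR 9 = 9.
Proof. rewrite INR_IZR_INZ. reflexivity. Qed.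

(* The two polynomial inequalities behind the range 0 < s <= 9; the integer
   constants are 10^19 times 4 (1 +- 1.79e-4)^2 and the bounds on pi. *)
Lemma small_upper_certified (s : R) : 0 < s <= 9 ->
  31415927 / 10000000 * (1 - texpR 35 (uarg s))
  < 4 * (1 + 179 / 1000000) ^ 2 * (s * Lsum 31 s ^ 2).
Proof.
  intros Hs.
  assert (Hpos : pos_on (cert 31 35 40014321281640000000 31415927000000000000) 9 = true)
    by (vm_compute; reflexivity).
  assert (H := cert_sound 31 35 40014321281640000000 31415927000000000000 s
                 ltac:(lra) one_minus_Tpoly_35_hd
                 ltac:(apply (pos_on_correct _ 8 Hpos); rewrite INR_9; lra)).
  lra.
Qed.

Lemma small_lower_certified (s : R) : 0 < s <= 9 ->
  4 * (1 - 179 / 1000000) ^ 2 * (s * Lsum 30 s ^ 2)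
  < 31415926 / 10000000 * (1 - texpR 34 (uarg s)).
Proof.
  intros Hs.
  assert (Hpos : pos_on (cert 30 34 (-39985681281640000000) (-31415926000000000000)) 9 = true)
    by (vm_compute; reflexivity).
  assert (H := cert_sound 30 34 (-39985681281640000000) (-31415926000000000000) s
                 ltac:(lra) one_minus_Tpoly_34_hd
                 ltac:(apply (pos_on_correct _ 8 Hpos); rewrite INR_9; lra)).
  lra.
Qed.

Lemma Lsum_31_pos (s : R) : 0 <= s <= 9 -> 0 < Lsum 31 s.
Proof.
  intros Hs.
  assert (Hpos : pos_on (Lpoly 31) 9 = true) by (vm_compute; reflexivity).
  assert (H := pos_on_correct _ 8 Hpos s ltac:(rewrite INR_9; lra)).
  rewrite pev_Lpoly in H. assert (HC := Lden_pos 31).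
  apply (Rmult_lt_reg_l (IZR (Lden 31))); lra.
Qed.

Lemma sandwich_small (x : R) : 0 < x -> x ^ 2 <= 9 ->
  (1 - 179 / 1000000) ^ 2 * (4 * G x ^ 2) < PI * (1 - exp (- uarg (x ^ 2)))
  < (1 + 179 / 1000000) ^ 2 * (4 * G x ^ 2).
Proof.
  intros Hx Hs9. set (s := x ^ 2) in *.
  assert (Hs : 0 < s) by (unfold s; apply pow_lt; lra).
  assert (Hu := uarg_ge s (Rlt_le _ _ Hs)).
  set (e := exp (- uarg s)).
  assert (He : e <= 1) by (apply exp_neg_le1; lra).
  assert (Hlo := G_taylor 31 x (Rlt_le _ _ Hx)).
  assert (Hhi := G_taylor 30 x (Rlt_le _ _ Hx)).
  assert (Telo := exp_neg_taylor 35 (uarg s) ltac:(lra)).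
  assert (Tehi := exp_neg_taylor 34 (uarg s) ltac:(lra)).
  replace ((-1) ^ 32) with 1 in Hlo by ring. replace ((-1) ^ 31) with (-1) in Hhi by ring.
  replace ((-1) ^ 36) with 1 in Telo by ring. replace ((-1) ^ 35) with (-1) in Tehi by ring.
  fold s e in Hlo, Hhi, Telo, Tehi.
  assert (HL := Lsum_31_pos s ltac:(lra)).
  assert (HA := small_upper_certified s ltac:(lra)).
  assert (HB := small_lower_certified s ltac:(lra)).
  assert (HPl := PI_lower). assert (HPu := PI_upper).
  assert (HxL : 0 < x * Lsum 31 s) by (apply Rmult_lt_0_compat; lra).
  assert (HG2l : s * Lsum 31 s ^ 2 <= G x ^ 2).
  { replace (s * Lsum 31 s ^ 2) with ((x * Lsum 31 s) ^ 2) by (unfold s; ring).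
    apply pow_incr; lra. }
  assert (HG2u : G x ^ 2 <= s * Lsum 30 s ^ 2).
  { replace (s * Lsum 30 s ^ 2) with ((x * Lsum 30 s) ^ 2) by (unfold s; ring).
    apply pow_incr; lra. }
  assert (HLs : 0 <= s * Lsum 30 s ^ 2) by (apply Rmult_le_pos; [lra | apply pow2_ge_0]).
  split.
  - apply Rle_lt_trans with (4 * (1 - 179 / 1000000) ^ 2 * (s * Lsum 30 s ^ 2)); [nra|].
    apply Rlt_le_trans with (31415926 / 10000000 * (1 - texpR 34 (uarg s))); [exact HB|].
    assert (0 < 1 - texpR 34 (uarg s)) by nra.
    apply Rmult_le_compat; lra.
  - apply Rle_lt_trans with (31415927 / 10000000 * (1 - texpR 35 (uarg s))).
    + apply Rmult_le_compat; lra.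
    + apply Rlt_le_trans with (4 * (1 + 179 / 1000000) ^ 2 * (s * Lsum 31 s ^ 2)); [exact HA|].
      nra.
Qed.

Lemma exp_neg_9 : exp (- 9) < 13 / 100000.
Proof.
  assert (H := exp_neg_taylor 34 9 ltac:(lra)).
  replace ((-1) ^ 35) with (-1) in H by ring. change (- (9)) with (-9) in H.
  assert (texpR 34 9 < 13 / 100000); [|lra].
  unfold texpR. cbv [sum_f_R0 zfact Z.of_nat Z.mul Pos.mul Pos.of_succ_nat Pos.succ Pos.add].
  lra.
Qed.

(* The squared form of the claim on x^2 > 9, where both E(x)^2 and erf(x)^2 are
   within exp(-9) of 1. *)
Lemma sandwich_large (x : R) : 0 < x -> 9 < x ^ 2 ->
  (1 - 179 / 1000000) ^ 2 * (4 * G x ^ 2) < PI * (1 - exp (- uarg (x ^ 2)))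
  < (1 + 179 / 1000000) ^ 2 * (4 * G x ^ 2).
Proof.
  intros Hx Hs9.
  assert (Hu := uarg_ge (x ^ 2) ltac:(lra)).
  assert (He : exp (- uarg (x ^ 2)) < 13 / 100000).
  { apply Rle_lt_trans with (exp (- 9)); [|exact exp_neg_9].
    left. apply exp_increasing. lra. }
  assert (Hes : exp (- (x ^ 2)) < 13 / 100000).
  { apply Rlt_trans with (exp (- 9)); [apply exp_increasing; lra | exact exp_neg_9]. }
  assert (He0 := exp_pos (- uarg (x ^ 2))). assert (Hes0 := exp_pos (- (x ^ 2))).
  assert (Hlo := G_sq_ge x (Rlt_le _ _ Hx)). assert (Hhi := G_sq_le x (Rlt_le _ _ Hx)).
  assert (HPI := PI_RGT_0).
  split; nra.
Qed.

Lemma rel_error_of_squares (a F c : R) : 0 <= a -> 0 < F -> 0 <= c ->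
  (1 - c) ^ 2 * F ^ 2 < a ^ 2 < (1 + c) ^ 2 * F ^ 2 -> Rabs ((a - F) / F) < c.
Proof.
  intros Ha HF Hc [Hlo Hhi].
  assert (Hup : a < (1 + c) * F).
  { apply Rsqr_incrst_0; unfold Rsqr; nra. }
  assert (Hdown : (1 - c) * F < a).
  { destruct (Rle_or_lt ((1 - c) * F) 0) as [Hn|Hp]; [nra|].
    apply Rsqr_incrst_0; unfold Rsqr; nra. }
  apply Rabs_def1; apply (Rmult_lt_reg_r F); try lra;
    unfold Rdiv; rewrite Rmult_assoc, Rinv_l by lra; lra.
Qed.

Theorem mainTheorem2 :
  forall x : R, 0 < x ->
    Rabs ((E_approx x - erf x) / erf x) < 179 / 1000000.
Proof.
  intros x Hx.
  assert (Hsq : (1 - 179 / 1000000) ^ 2 * (4 * G x ^ 2) < PI * (1 - exp (- uarg (x ^ 2)))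
                < (1 + 179 / 1000000) ^ 2 * (4 * G x ^ 2)).
  { destruct (Rle_or_lt (x ^ 2) 9).
    - apply sandwich_small; assumption.
    - apply sandwich_large; assumption. }
  assert (HE : E_approx x = sqrt (1 - exp (- uarg (x ^ 2)))).
  { unfold E_approx, uarg. do 3 f_equal. ring. }
  assert (He : exp (- uarg (x ^ 2)) <= 1)
    by (apply exp_neg_le1; apply Rle_trans with (x ^ 2); [apply pow2_ge_0 | apply uarg_ge, pow2_ge_0]).
  assert (HPI := PI_RGT_0).
  assert (HsPI : 0 < sqrt PI) by (apply sqrt_lt_R0; lra).
  assert (HG := G_pos x Hx).
  rewrite erf_eq_G, HE.
  apply rel_error_of_squares; [apply sqrt_pos | apply Rmult_lt_0_compat; [apply Rdiv_lt_0_compat|]; lra | lra |].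
  rewrite pow2_sqrt by lra.
  replace ((2 / sqrt PI * G x) ^ 2) with (4 * G x ^ 2 / PI)
    by (unfold Rdiv; rewrite Rpow_mult_distr, Rpow_mult_distr, pow_inv, pow2_sqrt by lra; ring).
  destruct Hsq as [Hlo Hhi]. split; apply (Rmult_lt_reg_l PI); try lra;
    unfold Rdiv; field_simplify; lra.
Qed.
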